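(* Let $N$ be the coarse-grained compartment model with internal chemistry $0\to S$ (rate constant $\kappa_b\ge0$), $S\to0$ (rate constant $\kappa_d\ge0$), compartment parameters $\kappa_I,\kappa_E,\kappa_F,\kappa_C\ge0$, inflow distribution $\mu$ on $\mathbb Z_{\ge0}$ with $\lambda:=\sum_xx\mu(x)<\infty$, and arbitrary fragmentation kernel $\psi$. If $(\kappa_F-\kappa_E)\kappa_b>(\kappa_E+\kappa_d)\kappa_E$, $\kappa_I>0$ and $\kappa_C=0$, then all states are transient for $N$.
   Context: The state space of $N$ is $\mathcal N=\{n:\mathbb Z_{\ge0}\to\mathbb Z_{\ge0}\text{ finitely supported}\}$, where $n_x$ is the number of compartments containing exactly $x$ molecules of $S$; $e_x$ is the indicator of $x$. The kernel $\psi$ satisfies $\psi(x,y)=0$ for $y>x$ and $y\mapsto\psi(x,y)$ is a probability measure for each $x$. $N$ is the continuous-time Markov chain with generator $\mathcal LV(n)=\sum_{x=0}^\infty\Big[\kappa_bn_x\big(V(n-e_x+e_{x+1})-V(n)\big)+\kappa_dn_xx\big(V(n-e_x+e_{x-1})-V(n)\big)+\kappa_I\mu(x)\big(V(n+e_x)-V(n)\big)+\kappa_En_x\big(V(n-e_x)-V(n)\big)+\kappa_Fxn_x\sum_{y=0}^\infty\psi(x,y)\big(V(n-e_x+e_y+e_{x-y})-V(n)\big)+\kappa_C\binom{n_x}2\big(V(n-2e_x+e_{2x})-V(n)\big)+\sum_{y\ne x}\kappa_C\frac{n_xn_y}2\big(V(n-e_x-e_y+e_{x+y})-V(n)\big)\Big]$.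 *)

From HB Require Import structures.
From mathcomp Require Import all_boot all_order all_algebra.
From mathcomp Require Import all_classical all_reals all_analysis.
Set Implicit Arguments. Unset Strict Implicit. Unset Printing Implicit Defensive.
Import Order.TTheory GRing.Theory Num.Theory.
Local Open Scope ring_scope.

(* States: functions n : nat -> nat (n x = number of compartments with x
   molecules); the state space of the model is the set of finitely supported
   ones. *)
Definition fin_supp (n : nat -> nat) : Prop :=
  finite_set [set x | n x != 0%N].

Definition move (n : nat -> nat) (a b : nat) : nat -> nat :=
  fun z => (n z - (z == a) + (z == b))%N.
Definition add1 (n : nat -> nat) (a : nat) : nat -> nat :=
  fun z => (n z + (z == a))%N.
Definition sub1 (n : nat -> nat) (a : nat) : nat -> nat :=
  fun z => (n z - (z == a))%N.
Definition frag (n : nat -> nat) (x y : nat) : nat -> nat :=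
  fun z => (n z - (z == x) + (z == y) + (z == x - y))%N.
Definition coal2 (n : nat -> nat) (x : nat) : nat -> nat :=
  fun z => (n z - 2 * (z == x) + (z == x.*2))%N.
Definition coal (n : nat -> nat) (x y : nat) : nat -> nat :=
  fun z => (n z - (z == x) - (z == y) + (z == x + y))%N.

Local Open Scope ereal_scope.

(* rate_sum V n = sum over all transitions n -> m of (rate) * V m, read off
   literally from the generator L (so that L V n = rate_sum V n - q(n) V n,
   with q(n) = rate_sum 1 n the total jump rate). *)
Definition rate_sum {R : realType} (kb kd kI kE kF kC : R) (mu : nat -> R)
  (psi : nat -> nat -> R) (V : (nat -> nat) -> \bar R) (n : nat -> nat)
  : \bar R :=
  \sum_(0 <= x <oo)
   ( (kb * (n x)%:R)%:E * V (move n x x.+1)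
   + (kd * (n x)%:R * x%:R)%:E * V (move n x x.-1)
   + (kI * mu x)%:E * V (add1 n x)
   + (kE * (n x)%:R)%:E * V (sub1 n x)
   + (kF * x%:R * (n x)%:R)%:E *
        \sum_(0 <= y <oo) ((psi x y)%:E * V (frag n x y))
   + (kC * ('C(n x, 2))%:R)%:E * V (coal2 n x)
   + \sum_(0 <= y <oo)
        (if y == x then 0
         else (kC * (n x)%:R * (n y)%:R / 2)%:E * V (coal n x y))).

Definition total_rate {R : realType} kb kd kI kE kF kC (mu : nat -> R) psi
  (n : nat -> nat) : \bar R :=
  rate_sum kb kd kI kE kF kC mu psi (fun _ => 1) n.

(* One step of the embedded jump chain: expectation of V after one jump
   from n (absorbing if the total rate vanishes). *)
Definition jump {R : realType} kb kd kI kE kF kC (mu : nat -> R) psi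
  (V : (nat -> nat) -> \bar R) (n : nat -> nat) : \bar R :=
  if total_rate kb kd kI kE kF kC mu psi n == 0 then V n
  else rate_sum kb kd kI kE kF kC mu psi V n *
         ((fine (total_rate kb kd kI kE kF kC mu psi n))^-1)%:E.

(* hit i k m = probability that the jump chain started at m visits i
   within k steps (first-step recursion). *)
Fixpoint hit {R : realType} kb kd kI kE kF kC (mu : nat -> R) psi
  (i : nat -> nat) (k : nat) (m : nat -> nat) : \bar R :=
  match k with
  | 0%N => if `[< m = i >] then 1 else 0
  | k'.+1 => if `[< m = i >] then 1
             else jump kb kd kI kE kF kC mu psi
                    (hit kb kd kI kE kF kC mu psi i k') m
  end.

(* probability of returning to i within k+1 jumps, starting from i *)
Definition ret {R : realType} kb kd kI kE kF kC (mu : nat -> R) psi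
  (i : nat -> nat) (k : nat) : \bar R :=
  jump kb kd kI kE kF kC mu psi (hit kb kd kI kE kF kC mu psi i k) i.

Definition transient {R : realType} kb kd kI kE kF kC (mu : nat -> R) psi
  (i : nat -> nat) : Prop :=
  ereal_sup (range (ret kb kd kI kE kF kC mu psi i)) < 1.

From HB Require Import structures.
From mathcomp Require Import all_boot all_order all_algebra.
From mathcomp Require Import all_classical all_reals all_analysis.
From mathcomp Require Import ring lra.
Import Order.TTheory GRing.Theory Num.Theory.
Set Implicit Arguments. Unset Strict Implicit. Unset Printing Implicit Defensive.
Local Open Scope classical_set_scope.
Local Open Scope ring_scope.

(* Fix 0 < s < 1 and c > 0, put theta x = s / (1 + c x) and V n = prod_x theta x ^ n_x.
   Birth, death, exit and fragmentation (into y and x - y) in a compartment with x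
   molecules multiply V by theta (x+1) / theta x, theta (x-1) / theta x, 1 / theta x and
   theta y theta (x-y) / theta x, while an inflow multiplies it by theta x <= s.  When
   (kE + kd) kE < (kF - kE) kb, s and c can be chosen so that compartment events have
   nonpositive drift, hence the inflow makes the drift of V at most -kI (1 - s) V < 0.
   Then V / V n is strictly superharmonic for the jump chain: it dominates the
   probabilities of hitting n, so the return probability to n is at most its one-step
   average from n, which is < 1. *)

Lemma fin_supp_bounded n :
  fin_supp n -> exists b, forall x, (b <= x)%N -> n x = 0%N.
Proof.
move=> /finite_seqP[s supp_s]; exists (\max_(x <- s) x.+1) => x bx.
apply/eqP; apply: contraTT bx => nx0; rewrite -ltnNge.
have : [set x | n x != 0%N] x by [].
by rewrite supp_s /= => xs; apply: (@leq_bigmax_seq _ _ xpredT (fun y => y.+1) x).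
Qed.

Lemma fin_supp_le_except n m a :
  fin_supp n -> (forall z, z != a -> (m z <= n z)%N) -> fin_supp m.
Proof.
move=> fn mn; apply: (@sub_finite_set _ _ ([set z | n z != 0%N] `|` [set a])).
  move=> z /= mz0; have [->|za] := eqVneq z a; first by right.
  by left; apply: contra mz0 => /eqP nz0; rewrite -leqn0 -nz0 mn.
by rewrite finite_setU; split => //; apply: finite_set1.
Qed.

Lemma fin_supp_add1 n a : fin_supp n -> fin_supp (add1 n a).
Proof.
move=> fn; apply: (fin_supp_le_except (a := a) fn) => z /negbTE za.
by rewrite /add1 za addn0.
Qed.

Lemma fin_supp_sub1 n a : fin_supp n -> fin_supp (sub1 n a).
Proof. by move=> fn; apply: (fin_supp_le_except (a := a) fn) => z _; apply: leq_subr. Qed.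

Lemma fin_supp_move n a b : fin_supp n -> fin_supp (move n a b).
Proof. by move=> fn; apply/fin_supp_add1/fin_supp_sub1. Qed.

Lemma fin_supp_frag n x y : fin_supp n -> fin_supp (frag n x y).
Proof. by move=> fn; apply/fin_supp_add1/fin_supp_add1/fin_supp_sub1. Qed.

Lemma fin_supp_coal2 n x : fin_supp n -> fin_supp (coal2 n x).
Proof.
move=> fn; apply: (fin_supp_le_except (a := x.*2) fn) => z /negbTE zx.
by rewrite /coal2 zx addn0 leq_subr.
Qed.

Lemma fin_supp_coal n x y : fin_supp n -> fin_supp (coal n x y).
Proof.
move=> fn; apply: (fin_supp_le_except (a := x + y) fn) => z /negbTE zx.
by rewrite /coal zx addn0 -subnDA leq_subr.
Qed.

Section Lyapunov.
Variables (R : realType) (s c : R).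
Hypotheses (s_gt0 : 0 < s) (c_gt0 : 0 < c).

Definition theta (x : nat) : R := s / (1 + c * x%:R).

Let denom_gt0 x : 0 < 1 + c * x%:R.
Proof. by rewrite ltr_pwDl // mulr_ge0 // ltW. Qed.

Lemma theta_gt0 x : 0 < theta x.
Proof. by rewrite divr_gt0. Qed.

Lemma theta_mulD x : theta x * (1 + c * x%:R) = s.
Proof. by rewrite divfK // gt_eqF. Qed.

Lemma theta_le x : theta x <= s.
Proof.
rewrite ler_pdivrMr // mulrDr mulr1 lerDl.
by rewrite !mulr_ge0 // ltW.
Qed.

Lemma theta_geS x : theta x.+1 <= theta x.
Proof.
rewrite ler_pM2l // lef_pV2 ?posrE // lerD2l ler_pM2l //.
by rewrite ler_nat.
Qed.

Lemma theta_mul_le x y : (y <= x)%N -> theta y * theta (x - y) <= s * theta x.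
Proof.
move=> yx; have ty := theta_mulD y; have txy := theta_mulD (x - y).
have tx := theta_mulD x; have pos_y := denom_gt0 y; have pos_xy := denom_gt0 (x - y).
have grow : 1 + c * x%:R <= (1 + c * y%:R) * (1 + c * (x - y)%:R).
  have : 0 <= c * y%:R * (c * (x - y)%:R) by rewrite !mulr_ge0 // ltW.
  rewrite natrB //; nra.
rewrite -(ler_pM2r (mulr_gt0 pos_y pos_xy)).
have -> : theta y * theta (x - y) * ((1 + c * y%:R) * (1 + c * (x - y)%:R)) = s * s.
  by rewrite mulrACA ty txy.
have := ler_wpM2l (mulr_ge0 (ltW s_gt0) (ltW (theta_gt0 x))) grow.
by rewrite -mulrA tx.
Qed.

(* [supp_bound n] is an arbitrary [get] value unless n is finitely supported;
   [lyapE] is the usable description of [lyap]. *)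
Definition supp_bound (n : nat -> nat) : nat :=
  get (fun b : nat => forall x, (b <= x)%N -> n x = 0%N).

Definition lyap (n : nat -> nat) : R := \prod_(0 <= x < supp_bound n) theta x ^+ n x.

Lemma lyap_gt0 n : 0 < lyap n.
Proof. by apply: prodr_gt0 => x _; rewrite exprn_gt0 // theta_gt0. Qed.

Let prod_theta_widen n b b' : (forall x, (b <= x)%N -> n x = 0%N) -> (b <= b')%N ->
  \prod_(0 <= x < b') theta x ^+ n x = \prod_(0 <= x < b) theta x ^+ n x.
Proof.
move=> nb bb'; rewrite (@big_cat_nat _ _ _ b 0 b' _ _ (leq0n b) bb') /=.
rewrite [X in _ * X]big_nat_cond [X in _ * X]big1 ?mulr1 //.
by move=> x /andP[/andP[bx _] _]; rewrite nb.
Qed.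

Lemma lyapE n b : (forall x, (b <= x)%N -> n x = 0%N) ->
  lyap n = \prod_(0 <= x < b) theta x ^+ n x.
Proof.
move=> nb; have nbnd : forall x, (supp_bound n <= x)%N -> n x = 0%N.
  by apply: (getPex (P := fun b => forall x, (b <= x)%N -> n x = 0%N)); exists b.
rewrite /lyap -(prod_theta_widen nbnd (leq_maxl _ b)).
by rewrite (prod_theta_widen nb) // leq_maxr.
Qed.

Lemma lyap_add1 n a : fin_supp n -> lyap (add1 n a) = lyap n * theta a.
Proof.
move=> /fin_supp_bounded[b nb]; pose b' := maxn b a.+1.
have nb' x : (b' <= x)%N -> n x = 0%N by rewrite geq_max => /andP[/nb].
have nab' x : (b' <= x)%N -> add1 n a x = 0%N.
  rewrite geq_max => /andP[bx ax]; rewrite /add1 nb //.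
  by case: eqP ax => // ->; rewrite ltnn.
rewrite (lyapE nab') (lyapE nb') /add1.
under eq_bigr do rewrite exprD.
rewrite big_split /=; congr (_ * _).
rewrite (eq_bigr (fun x => if x == a then theta a else 1)); last first.
  by move=> x _; case: eqP => [->|]; rewrite ?expr1 ?expr0.
by rewrite -big_mkcond big_nat1_eq /b' leq_max ltnSn orbT.
Qed.

Lemma lyap_sub1 n a : fin_supp n -> (0 < n a)%N -> lyap (sub1 n a) = lyap n / theta a.
Proof.
move=> fn na; have theta_neq0 := gt_eqF (theta_gt0 a).
have restore : add1 (sub1 n a) a = n.
  apply/funext => z; rewrite /add1 /sub1.
  by case: eqP => [->|]; rewrite ?subn0 ?addn0 ?subnK.
have fsub := fin_supp_sub1 a fn.
by rewrite -[in RHS]restore lyap_add1 ?mulfK ?theta_neq0.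
Qed.

Lemma lyap_move n a b : fin_supp n -> (0 < n a)%N ->
  lyap (move n a b) = lyap n * theta b / theta a.
Proof.
move=> fn na; rewrite (_ : move n a b = add1 (sub1 n a) b) //.
have fsub := fin_supp_sub1 a fn.
by rewrite lyap_add1 // lyap_sub1 // mulrAC.
Qed.

Lemma lyap_frag n x y : fin_supp n -> (0 < n x)%N ->
  lyap (frag n x y) = lyap n * (theta y * theta (x - y)) / theta x.
Proof.
move=> fn nx; rewrite (_ : frag n x y = add1 (add1 (sub1 n x) y) (x - y)) //.
have fsub := fin_supp_sub1 x fn; have fadd := fin_supp_add1 y fsub.
by rewrite !lyap_add1 // lyap_sub1 //; ring.
Qed.

End Lyapunov.

Section CompartmentDrift.
Variables (R : realType) (kb kd kE kF s c : R).
Hypotheses (kb0 : 0 <= kb) (kd0 : 0 <= kd) (kE0 : 0 <= kE) (kF0 : 0 <= kF).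
Hypotheses (s_gt0 : 0 < s) (s_lt1 : s < 1) (c_gt0 : 0 < c).
Hypothesis empty_drift : kE * (1 - s) * (1 + c) <= kb * c * s.
Hypothesis occupied_drift : kE * c + kd * c * s + kE * (1 - s) <= kF * (1 - s) * s.

Local Notation theta := (theta s c).

Lemma empty_compartment_drift_le0 :
  kb * (theta 1 - theta 0) + kE * (1 - theta 0) <= 0.
Proof.
have t1 := theta_mulD s c_gt0 1; rewrite mulr1 in t1.
have -> : theta 0 = s by rewrite /theta mulr0 addr0 divr1.
rewrite -(pmulr_rle0 _ (ltr_pwDl ltr01 (ltW c_gt0))).
have -> : (1 + c) * (kb * (theta 1 - s) + kE * (1 - s))
    = kb * (theta 1 * (1 + c)) - kb * s * (1 + c) + kE * (1 - s) * (1 + c) by ring.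
rewrite t1.
have -> : kb * s - kb * s * (1 + c) = - (kb * c * s) by ring.
by rewrite addrC subr_le0.
Qed.

Lemma occupied_compartment_drift_le0 x P : P <= s * theta x.+1 ->
  kb * (theta x.+2 - theta x.+1) + kd * x.+1%:R * (theta x - theta x.+1)
  + kE * (1 - theta x.+1) + kF * x.+1%:R * (P - theta x.+1) <= 0.
Proof.
move=> hP; set X : R := x.+1%:R; set D := 1 + c * X; set t := theta x.+1.
have X1 : 1 <= X by rewrite ler1n.
have D_gt0 : 0 < D by rewrite ltr_pwDl // mulr_ge0 // ltW.
have tD : t * D = s := theta_mulD s c_gt0 x.+1.
have prevD : theta x * D <= s * (1 + c).
  have -> : D = (1 + c * x%:R) + c by rewrite /D /X -addn1 natrD; ring.
  rewrite mulrDr theta_mulD // mulrDr mulr1 lerD2l ler_pM2r //.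
  exact: theta_le.
have PD : P * D <= s * s by have := ler_wpM2r (ltW D_gt0) hP; rewrite -mulrA tD.
have birth_le0 : kb * (theta x.+2 - t) <= 0.
  by rewrite mulr_ge0_le0 // subr_le0 theta_geS.
suff : D * (kd * X * (theta x - t) + kE * (1 - t) + kF * X * (P - t)) <= 0.
  by rewrite pmulr_rle0 // => ?; lra.
have -> : D * (kd * X * (theta x - t) + kE * (1 - t) + kF * X * (P - t))
    = kd * X * (theta x * D - s) + kE * (D - s) + kF * X * (P * D - s).
  by rewrite -tD; ring.
have death : kd * X * (theta x * D - s) <= kd * X * (s * c).
  by rewrite ler_wpM2l ?mulr_ge0 ?ler0n // lerBlDl; lra.
have frag : kF * X * (P * D - s) <= kF * X * (s * s - s).
  by rewrite ler_wpM2l ?mulr_ge0 ?ler0n // lerD2r.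
have scaled : X * (kE * c + kd * c * s + kE * (1 - s)) <= X * (kF * (1 - s) * s).
  by rewrite ler_wpM2l // ler0n.
have exitX : kE * (1 - s) <= kE * (1 - s) * X.
  by rewrite ler_peMr // mulr_ge0 // subr_ge0 ltW.
move: death frag; rewrite /D; clearbody X t => death frag; lra.
Qed.

Lemma compartment_drift_le0 x P : P <= s * theta x ->
  kb * (theta x.+1 - theta x) + kd * x%:R * (theta x.-1 - theta x)
  + kE * (1 - theta x) + kF * x%:R * (P - theta x) <= 0.
Proof.
case: x => [|x] hP; last exact: occupied_compartment_drift_le0.
by rewrite !mulr0 !mul0r !addr0; apply: empty_compartment_drift_le0.
Qed.

End CompartmentDrift.

Lemma exists_small_pos (R : realFieldType) (A1 B1 A2 B2 : R) :
  0 < A1 -> 0 < A2 -> 0 <= B1 -> 0 <= B2 ->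
  exists p, [/\ 0 < p, p < 1, p * B1 <= A1 & p * B2 <= A2].
Proof.
move=> A1_gt0 A2_gt0 B1_ge0 B2_ge0.
have q1 : 0 <= B1 / A1 by rewrite divr_ge0 // ltW.
have q2 : 0 <= B2 / A2 by rewrite divr_ge0 // ltW.
have e1 : A1 * (B1 / A1) = B1 by rewrite mulrC divfK // gt_eqF.
have e2 : A2 * (B2 / A2) = B2 by rewrite mulrC divfK // gt_eqF.
have f1 : 0 <= A1 * (B2 / A2) by rewrite mulr_ge0 // ltW.
have f2 : 0 <= A2 * (B1 / A1) by rewrite mulr_ge0 // ltW.
pose Q := 2 + B1 / A1 + B2 / A2.
have Q_gt1 : 1 < Q by rewrite /Q; lra.
have Q_gt0 : 0 < Q by lra.
exists Q^-1; split; first by rewrite invr_gt0.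
- by rewrite invf_lt1.
- by rewrite mulrC ler_pdivrMr // /Q !mulrDr; lra.
- by rewrite mulrC ler_pdivrMr // /Q !mulrDr; lra.
Qed.

Lemma exists_rate_gap (R : realFieldType) (kb kd kE kF : R) :
  0 <= kb -> 0 <= kd -> 0 <= kE ->
  (kE + kd) * kE < (kF - kE) * kb ->
  exists2 k, 0 < k & kE < kb * k /\ (kE + kd) * k + kE < kF.
Proof.
move=> kb0 kd0 kE0 gap.
have kb_gt0 : 0 < kb.
  rewrite lt_def kb0 andbT; apply: contraTneq gap => ->.
  by rewrite mulr0 -leNgt mulr_ge0 ?addr_ge0.
pose D := (kF - kE) * kb - (kE + kd) * kE.
have D_gt0 : 0 < D by rewrite subr_gt0.
pose t := D / (kE + kd + 1).
have t_gt0 : 0 < t by rewrite divr_gt0 //; lra.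
have tD : t * (kE + kd + 1) = D by rewrite divfK // gt_eqF //; lra.
exists ((kE + t) / kb); first by rewrite divr_gt0 // ltr_pwDr.
split; first by rewrite mulrC divfK ?gt_eqF // ltrDl.
rewrite -(ltr_pM2r kb_gt0) mulrDl -mulrA divfK ?gt_eqF //.
move: tD; rewrite /D; clearbody t; nra.
Qed.

(* Take kE / kb < k < (kF - kE) / (kE + kd), then s = 1 - p and c = k p for small p. *)
Lemma lyapunov_parameters (R : realFieldType) (kb kd kE kF : R) :
  0 <= kb -> 0 <= kd -> 0 <= kE -> 0 <= kF ->
  (kE + kd) * kE < (kF - kE) * kb ->
  exists s c : R, [/\ 0 < s < 1, 0 < c, kE * (1 - s) * (1 + c) <= kb * c * s
    & kE * c + kd * c * s + kE * (1 - s) <= kF * (1 - s) * s].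
Proof.
move=> kb0 kd0 kE0 kF0 gap.
have [k k_gt0 [birth_k frag_k]] := exists_rate_gap kb0 kd0 kE0 gap.
have birth_gap : 0 < kb * k - kE by rewrite subr_gt0.
have frag_gap : 0 < kF - kE - (kE + kd) * k by lra.
have birth_k_ge0 : 0 <= (kE + kb) * k by rewrite mulr_ge0 ?addr_ge0 // ltW.
have [p [p_gt0 p_lt1 hp1 hp2]] := exists_small_pos birth_gap frag_gap birth_k_ge0 kF0.
exists (1 - p), (k * p); split; first by apply/andP; split; lra.
- exact: mulr_gt0.
- by have := ler_wpM2l (ltW p_gt0) hp1; nra.
- have : 0 <= kd * k * p * p by rewrite !mulr_ge0 // ltW.
  by have := ler_wpM2l (ltW p_gt0) hp2; nra.
Qed.

Lemma nneseries_finite (R : realType) (f : nat -> R) N :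
  (forall y, 0 <= f y) -> (forall y, (N <= y)%N -> f y = 0) ->
  (\sum_(0 <= y <oo) (f y)%:E = (\sum_(0 <= y < N) f y)%:E)%E.
Proof.
move=> f_ge0 fN; rewrite (@nneseries_split _ _ 0 N); last by move=> k _; rewrite lee_fin.
by rewrite add0n eseries0 ?adde0 ?sumEFin // => i Ni _; rewrite fN.
Qed.

Section JumpChain.
Variables (R : realType) (kb kd kI kE kF kC : R) (mu : nat -> R) (psi : nat -> nat -> R).
Hypotheses (kb0 : (0 <= kb)%R) (kd0 : (0 <= kd)%R) (kI0 : (0 <= kI)%R)
  (kE0 : (0 <= kE)%R) (kF0 : (0 <= kF)%R) (kC0 : (0 <= kC)%R)
  (mu0 : forall x, (0 <= mu x)%R) (psi0 : forall x y, (0 <= psi x y)%R).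
Local Open Scope ereal_scope.

Local Notation rate_sum := (rate_sum kb kd kI kE kF kC mu psi).
Local Notation total_rate := (total_rate kb kd kI kE kF kC mu psi).
Local Notation jump := (jump kb kd kI kE kF kC mu psi).
Local Notation hit := (hit kb kd kI kE kF kC mu psi).

Definition rate_term (V : (nat -> nat) -> \bar R) (n : nat -> nat) (x : nat) : \bar R :=
   (kb * (n x)%:R)%:E * V (move n x x.+1)
   + (kd * (n x)%:R * x%:R)%:E * V (move n x x.-1)
   + (kI * mu x)%:E * V (add1 n x)
   + (kE * (n x)%:R)%:E * V (sub1 n x)
   + (kF * x%:R * (n x)%:R)%:E * \sum_(0 <= y <oo) ((psi x y)%:E * V (frag n x y))
   + (kC * ('C(n x, 2))%:R)%:E * V (coal2 n x)
   + \sum_(0 <= y <oo)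
        (if y == x then 0 else (kC * (n x)%:R * (n y)%:R / 2)%:E * V (coal n x y)).

Lemma rate_sumE V n : rate_sum V n = \sum_(0 <= x <oo) rate_term V n x.
Proof. by []. Qed.

Lemma rate_term_ge0 V n x : (forall m, 0 <= V m) -> 0 <= rate_term V n x.
Proof.
move=> V_ge0.
have scaled_ge0 r m : (0 <= r)%R -> 0 <= r%:E * V m by move=> r0; rewrite mule_ge0.
repeat apply: adde_ge0; rewrite ?scaled_ge0 ?mulr_ge0 //.
- by rewrite mule_ge0 ?lee_fin ?mulr_ge0 // nneseries_ge0 // => y _ _; rewrite scaled_ge0.
- apply: nneseries_ge0 => y _ _; case: ifP => // _.
  by rewrite scaled_ge0 // divr_ge0 // !mulr_ge0.
Qed.

Lemma le_rate_term V1 V2 n x : (forall m, 0 <= V1 m) ->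
  (forall m, fin_supp m -> V1 m <= V2 m) -> fin_supp n ->
  rate_term V1 n x <= rate_term V2 n x.
Proof.
move=> V1_ge0 V12 fn.
have scaled_le r m : (0 <= r)%R -> fin_supp m -> r%:E * V1 m <= r%:E * V2 m.
  by move=> r0 fm; rewrite lee_wpmul2l ?lee_fin // V12.
repeat apply: leeD.
- by apply: scaled_le; [rewrite mulr_ge0 | apply: fin_supp_move].
- by apply: scaled_le; [rewrite !mulr_ge0 | apply: fin_supp_move].
- by apply: scaled_le; [rewrite mulr_ge0 | apply: fin_supp_add1].
- by apply: scaled_le; [rewrite mulr_ge0 | apply: fin_supp_sub1].
- apply: lee_wpmul2l; first by rewrite lee_fin !mulr_ge0.
  apply: lee_nneseries; first by move=> y _ _; rewrite mule_ge0 ?lee_fin.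
  by move=> y _; apply: scaled_le => //; apply: fin_supp_frag.
- by apply: scaled_le; [rewrite mulr_ge0 | apply: fin_supp_coal2].
- apply: lee_nneseries.
    move=> y _ _; case: ifP => // _; rewrite mule_ge0 //.
    by rewrite lee_fin divr_ge0 // !mulr_ge0.
  move=> y _; case: ifP => // _; apply: scaled_le; last exact: fin_supp_coal.
  by rewrite divr_ge0 // !mulr_ge0.
Qed.

Lemma rate_sum_ge0 V n : (forall m, 0 <= V m) -> 0 <= rate_sum V n.
Proof. by move=> V_ge0; apply: nneseries_ge0 => x _ _; apply: rate_term_ge0. Qed.

Lemma jump_ge0 V n : (forall m, 0 <= V m) -> 0 <= jump V n.
Proof.
move=> V_ge0; rewrite /jump; case: ifP => _ //.
rewrite mule_ge0 ?rate_sum_ge0 // lee_fin invr_ge0 fine_ge0 //.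
by apply: rate_sum_ge0 => m; rewrite lee01.
Qed.

Lemma le_jump V1 V2 n : (forall m, 0 <= V1 m) ->
  (forall m, fin_supp m -> V1 m <= V2 m) -> fin_supp n -> jump V1 n <= jump V2 n.
Proof.
move=> V1_ge0 V12 fn; rewrite /jump; case: ifP => _; first exact: V12.
apply: lee_wpmul2r.
  by rewrite lee_fin invr_ge0 fine_ge0 //; apply: rate_sum_ge0 => m; rewrite lee01.
apply: lee_nneseries => [x _ _|x _]; first exact: rate_term_ge0.
exact: le_rate_term.
Qed.

Lemma hit_ge0 i k m : 0 <= hit i k m.
Proof.
elim: k m => [|k IH] m /=; case: ifP => _ //; rewrite ?lee01 //.
exact: jump_ge0.
Qed.

Lemma hit_le_superharmonic i W k m : (forall m, 0 <= W m) -> 1 <= W i ->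
  (forall m, fin_supp m -> m <> i -> jump W m <= W m) ->
  fin_supp m -> hit i k m <= W m.
Proof.
move=> W_ge0 Wi W_sup; elim: k m => [|k IH] m fm /=; case: asboolP => [->|mi] //.
apply: le_trans (W_sup m fm mi).
by apply: le_jump => // m'; apply: hit_ge0.
Qed.

Lemma transient_of_superharmonic i W : fin_supp i -> (forall m, 0 <= W m) -> 1 <= W i ->
  (forall m, fin_supp m -> m <> i -> jump W m <= W m) -> jump W i < 1 ->
  transient kb kd kI kE kF kC mu psi i.
Proof.
move=> fi W_ge0 Wi W_sup jump_lt1; apply: le_lt_trans jump_lt1.
apply: ge_ereal_sup => _ [k _ <-]; apply: le_jump => // [m|m fm].
  exact: hit_ge0.
exact: hit_le_superharmonic.
Qed.

End JumpChain.

Section LyapunovDrift.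
Variables (R : realType) (kb kd kI kE kF kC : R) (mu : nat -> R) (psi : nat -> nat -> R).
Hypotheses (kb0 : 0 <= kb) (kd0 : 0 <= kd) (kI0 : 0 <= kI)
  (kE0 : 0 <= kE) (kF0 : 0 <= kF) (kC0 : 0 <= kC)
  (mu0 : forall x, 0 <= mu x) (psi0 : forall x y, 0 <= psi x y).
Hypothesis mu1 : (\sum_(0 <= x <oo) (mu x)%:E = 1)%E.
Hypothesis psi_lower : forall x y, (x < y)%N -> psi x y = 0.
Hypothesis psi1 : forall x, (\sum_(0 <= y <oo) (psi x y)%:E = 1)%E.
Hypothesis no_coalescence : kC = 0.

Local Notation rate_term := (rate_term kb kd kI kE kF kC mu psi).
Local Notation rate_sum := (rate_sum kb kd kI kE kF kC mu psi).
Local Notation total_rate := (total_rate kb kd kI kE kF kC mu psi).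
Local Notation jump := (jump kb kd kI kE kF kC mu psi).

Lemma psi_sum x : \sum_(0 <= y < x.+1) psi x y = 1.
Proof.
apply: EFin_inj; rewrite -(psi1 x) (@nneseries_finite _ (psi x) x.+1) //.
exact: psi_lower.
Qed.

Lemma rate_term_real (w : (nat -> nat) -> R) n x : (forall m, 0 <= w m) ->
  rate_term (fun m => (w m)%:E) n x =
  (kb * (n x)%:R * w (move n x x.+1) + kd * (n x)%:R * x%:R * w (move n x x.-1)
   + kI * mu x * w (add1 n x) + kE * (n x)%:R * w (sub1 n x)
   + kF * x%:R * (n x)%:R * \sum_(0 <= y < x.+1) psi x y * w (frag n x y))%:E.
Proof.
move=> w_ge0; rewrite /rate_term no_coalescence.
rewrite (@nneseries_finite _ (fun y => psi x y * w (frag n x y)) x.+1); last 2 first.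
- by move=> y; rewrite mulr_ge0.
- by move=> y xy; rewrite psi_lower ?mul0r.
rewrite mul0r mul0e adde0 eseries0 ?adde0 //.
by move=> y _ _; rewrite !mul0r mul0e if_same.
Qed.

Lemma rate_term1 n x : rate_term (fun=> 1%E) n x =
  (kb * (n x)%:R + kd * (n x)%:R * x%:R + kI * mu x + kE * (n x)%:R
   + kF * x%:R * (n x)%:R)%:E.
Proof.
rewrite (@rate_term_real (fun=> 1)) //.
under eq_bigr do rewrite mulr1.
by rewrite psi_sum !mulr1.
Qed.

Variables (s c : R).
Hypotheses (s_gt0 : 0 < s) (s_lt1 : s < 1) (c_gt0 : 0 < c).
Hypothesis empty_drift : kE * (1 - s) * (1 + c) <= kb * c * s.
Hypothesis occupied_drift : kE * c + kd * c * s + kE * (1 - s) <= kF * (1 - s) * s.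

Local Notation theta := (theta s c).
Local Notation lyap := (lyap s c).

Lemma frag_average_le x :
  \sum_(0 <= y < x.+1) psi x y * (theta y * theta (x - y)) <= s * theta x.
Proof.
rewrite -[leRHS]mul1r -(psi_sum x) big_distrl /= big_nat_cond [leRHS]big_nat_cond.
apply: ler_sum => y /andP[/andP[_ yx] _].
by rewrite ler_wpM2l // theta_mul_le.
Qed.

Lemma lyap_drift_term a n x : 0 < a -> fin_supp n ->
  (rate_term (fun m => (a * lyap m)%:E) n x + (a * lyap n * kI * (1 - s) * mu x)%:E
    <= (a * lyap n)%:E * rate_term (fun=> 1%E) n x)%E.
Proof.
move=> a_gt0 fn; have lyap_ge0 m : 0 <= a * lyap m.
  by rewrite mulr_ge0 ?ltW ?lyap_gt0.
rewrite rate_term_real // rate_term1 -EFinM -EFinD lee_fin /=.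
set w := a * lyap n; set t := theta x.
have w_gt0 : 0 < w by rewrite mulr_gt0 ?lyap_gt0.
have t_gt0 : 0 < t := theta_gt0 s_gt0 c_gt0 x.
have inflow : 0 <= w * (kI * mu x) * (s - t).
  apply: mulr_ge0; first exact: mulr_ge0 (ltW w_gt0) (mulr_ge0 kI0 (mu0 x)).
  by rewrite subr_ge0; apply: theta_le.
have [nx0|nx_gt0] := posnP (n x).
  rewrite nx0 !mulr0 !mul0r !add0r !addr0 lyap_add1 //.
  have -> : kI * mu x * (a * (lyap n * t)) + w * kI * (1 - s) * mu x
      = w * (kI * mu x) - w * (kI * mu x) * (s - t) by rewrite /w; ring.
  by rewrite gerBl.
rewrite lyap_add1 // !lyap_move // lyap_sub1 //.
under eq_bigr do rewrite lyap_frag //.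
pose P := \sum_(0 <= y < x.+1) psi x y * (theta y * theta (x - y)).
have fragE : \sum_(0 <= y < x.+1) psi x y * (a * (lyap n * (theta y * theta (x - y)) / t))
    = w / t * P.
  by rewrite /P mulr_sumr; apply: eq_bigr => y _; rewrite /w; field; rewrite gt_eqF.
have := compartment_drift_le0 kb0 kd0 kE0 kF0 s_gt0 s_lt1 c_gt0 empty_drift
  occupied_drift (frag_average_le x).
rewrite fragE -subr_ge0 -/t -/P.
set G := (X in X <= 0) => G_le0.
have -> : w * (kb * (n x)%:R + kd * (n x)%:R * x%:R + kI * mu x + kE * (n x)%:R
            + kF * x%:R * (n x)%:R)
    - (kb * (n x)%:R * (a * (lyap n * theta x.+1 / t))
       + kd * (n x)%:R * x%:R * (a * (lyap n * theta x.-1 / t))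
       + kI * mu x * (a * (lyap n * t)) + kE * (n x)%:R * (a * (lyap n / t))
       + kF * x%:R * (n x)%:R * (w / t * P) + w * kI * (1 - s) * mu x)
    = w / t * (n x)%:R * (- G) + w * (kI * mu x) * (s - t).
  by rewrite /G /w; field; exact: lt0r_neq0.
rewrite addr_ge0 // mulr_ge0 ?oppr_ge0 // mulr_ge0 ?ler0n //.
by rewrite divr_ge0 ?ltW.
Qed.

Lemma lyap_drift a n : 0 < a -> fin_supp n ->
  (rate_sum (fun m => (a * lyap m)%:E) n + (a * lyap n * kI * (1 - s))%:E
    <= (a * lyap n)%:E * total_rate n)%E.
Proof.
move=> a_gt0 fn; set w := a * lyap n.
have lyap_ge0 m : (0 <= (a * lyap m)%:E)%E.
  by rewrite lee_fin mulr_ge0 ?ltW ?lyap_gt0.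
have loss_ge0 : 0 <= w * kI * (1 - s).
  apply: mulr_ge0; last by rewrite subr_ge0 ltW.
  by apply: mulr_ge0 => //; apply: mulr_ge0; rewrite ?ltW ?lyap_gt0.
have inflow_ge0 x : (0 <= (w * kI * (1 - s) * mu x)%:E)%E.
  by rewrite lee_fin mulr_ge0.
rewrite /total_rate !rate_sumE -nneseriesZl; last first.
  by move=> x _; apply: rate_term_ge0 => // m; rewrite lee01.
have -> : (w * kI * (1 - s))%:E = (\sum_(0 <= x <oo) (w * kI * (1 - s) * mu x)%:E)%E.
  rewrite (eq_eseriesr (fun x _ => EFinM _ _)) nneseriesZl ?mu1 ?mule1 //.
  by move=> x _; rewrite lee_fin.
rewrite -nneseriesD => [|x _ _|x _ _] //; last exact: rate_term_ge0.
by apply: lee_nneseries => [x _ _|x _]; [apply: adde_ge0 => //; apply: rate_term_ge0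
  | apply: lyap_drift_term].
Qed.

Hypothesis kI_gt0 : 0 < kI.

Lemma jump_lyap_lt a n : 0 < a -> fin_supp n ->
  (jump (fun m => (a * lyap m)%:E) n < (a * lyap n)%:E)%E.
Proof.
move=> a_gt0 fn; have w_gt0 : 0 < a * lyap n by rewrite mulr_gt0 ?lyap_gt0.
have loss_gt0 : 0 < a * lyap n * kI * (1 - s).
  by apply: mulr_gt0; [exact: mulr_gt0 | rewrite subr_gt0].
have q_ge0 : (0 <= rate_sum (fun m => (a * lyap m)%:E) n)%E.
  by apply: rate_sum_ge0 => // m; rewrite lee_fin mulr_ge0 ?ltW ?lyap_gt0.
have r_ge0 : (0 <= total_rate n)%E by apply: rate_sum_ge0 => // m; rewrite lee01.
move: (lyap_drift a_gt0 fn) q_ge0 r_ge0; rewrite /jump /total_rate.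
case: (rate_sum (fun=> 1%E) n) => [r| |] //=; last first.
  by move=> _ _ _; rewrite invr0 mule0 lte_fin.
case: (rate_sum (fun m => (a * lyap m)%:E) n) => [q| |] //=.
rewrite !lee_fin eqe => drift q_ge0 r_ge0; have [r0|r_neq0] := eqVneq r 0.
  by exfalso; move: drift; rewrite r0 mulr0; lra.
rewrite -EFinM lte_fin ltr_pdivrMr ?lt_def ?r_neq0 //; lra.
Qed.

End LyapunovDrift.

Theorem proposition4p7 (R : realType) (kb kd kI kE kF kC : R)
  (mu : nat -> R) (psi : nat -> nat -> R) :
  0 <= kb -> 0 <= kd -> 0 <= kI -> 0 <= kE -> 0 <= kF -> 0 <= kC ->
  (forall x, 0 <= mu x) ->
  (\sum_(0 <= x <oo) (mu x)%:E = 1)%E ->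
  (\sum_(0 <= x <oo) (x%:R * mu x)%:E < +oo)%E ->
  (forall x y, 0 <= psi x y) ->
  (forall x y, (x < y)%N -> psi x y = 0) ->
  (forall x, \sum_(0 <= y <oo) (psi x y)%:E = 1)%E ->
  (kE + kd) * kE < (kF - kE) * kb ->
  0 < kI ->
  kC = 0 ->
  forall n : nat -> nat, fin_supp n ->
    transient kb kd kI kE kF kC mu psi n.
Proof.
move=> kb0 kd0 kI0 kE0 kF0 kC0 mu0 mu1 _ psi0 psi_lower psi1 gap kI_gt0 kC_0 n fn.
have [s [c [/andP[s_gt0 s_lt1] c_gt0 empty_drift occupied_drift]]] :=
  lyapunov_parameters kb0 kd0 kE0 kF0 gap.
have Vn_gt0 := lyap_gt0 s_gt0 c_gt0 n.
have a_gt0 : 0 < (lyap s c n)^-1 by rewrite invr_gt0.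
have aVn : (lyap s c n)^-1 * lyap s c n = 1 by rewrite mulVf ?gt_eqF.
have drift := jump_lyap_lt kb0 kd0 kI0 kE0 kF0 kC0 mu0 psi0 mu1 psi_lower psi1 kC_0
  s_gt0 s_lt1 c_gt0 empty_drift occupied_drift kI_gt0 a_gt0.
apply: (transient_of_superharmonic kb0 kd0 kI0 kE0 kF0 kC0 mu0 psi0
  (W := fun m => ((lyap s c n)^-1 * lyap s c m)%:E)) => //=.
- by move=> m; rewrite lee_fin mulr_ge0 ?ltW ?lyap_gt0.
- by rewrite aVn.
- by move=> m fm _; apply/ltW/drift.
- by rewrite -aVn drift.
Qed.
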